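(* Let $X>0$, $n\ge1$, let $A_0,A_1$ be $X$-periodic $\mathbb{C}^{n\times n}$-valued functions in $L^2_{\rm per}([0,X])$, let $L=\partial_x^2+\partial_xA_1+A_0$ act on $L^2_{\rm per}([0,X];\mathbb{C}^n)$, and for $J\in\mathbb{N}$ let $P_J$ be the orthogonal projection onto $\mathcal{H}_J=\operatorname{span}\{e^{2\pi ikx/X}v:\ |k|\le J,\ v\in\mathbb{C}^n\}$. Let $L_J=P_JLP_J|_{\mathcal{H}_J}$ (the Hill truncation $\mathcal{D}_J^2+\mathcal{D}_J\mathcal{A}_{1,J}+\mathcal{A}_{0,J}$) and $K_J(\lambda)=P_JK(\lambda)P_J|_{\mathcal{H}_J}$, where $K(\lambda)=\partial_x(\partial_x^2-1)^{-1}A_1+(\partial_x^2-1)^{-1}(A_0+(1-\lambda)I)$. Define $D_J(\lambda)={\det}_2(I+K_J(\lambda))$ on $\mathcal{H}_J$. Then the zeros of $D_J$ coincide with the eigenvalues of the matrix $L_J$, and the order of each zero equals the algebraic multiplicity of the eigenvalue.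
   Context: In Fourier coordinates, $\mathcal{D}_J$ is the diagonal matrix of the multipliers $2\pi ik/X$, $|k|\le J$, and $\mathcal{A}_{m,J}$ is the block Toeplitz matrix $(\hat A_m(j-k))_{|j|,|k|\le J}$. On a finite-dimensional space ${\det}_2(I-A)=\det(I-A)e^{\operatorname{tr}A}$, and ${\det}_2(I+K)$ means ${\det}_2(I-(-K))$. *)

From mathcomp Require Import all_boot all_algebra complex.
From mathcomp Require Import all_classical all_reals all_analysis.
Set Implicit Arguments. Unset Strict Implicit. Unset Printing Implicit Defensive.
Import GRing.Theory Num.Theory.
Local Open Scope ring_scope.
Local Open Scope complex_scope.

Section Hill.
Variable R : realType.

Definition Cexp (z : R[i]) : R[i] :=
  (expR (complex.Re z))%:C * (cos (complex.Im z) +i* sin (complex.Im z)).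

(* Fredholm 2-determinant on a finite-dimensional space:
   det_2(I - A) = det(I - A) e^{tr A}.  We write det2 A for det_2(I - A). *)
Definition det2 (m : nat) (A : 'M[R[i]]_m) : R[i] :=
  \det (1%:M - A) * Cexp (\tr A).

Definition Ccont_at (g : R[i] -> R[i]) (z0 : R[i]) : Prop :=
  forall e : R, 0 < e -> exists2 d : R, 0 < d &
    forall z : R[i], `|z - z0| < d%:C -> `|g z - g z0| < e%:C.

Definition zero_order (f : R[i] -> R[i]) (z0 : R[i]) (m : nat) : Prop :=
  exists g : R[i] -> R[i],
    [/\ forall z, f z = (z - z0) ^+ m * g z, Ccont_at g z0 & g z0 != 0].

Variables (X : R) (n J : nat).

(* Fourier mode index: j : 'I_(2J+1) stands for k = j - J, |k| <= J.
   H_J is identified with C^{n(2J+1)} = blocks indexed by k. *)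
Definition freq (j : 'I_(J.*2.+1)) : int := j%:Z - J%:Z.

Notation dimJ := (\sum_(j < J.*2.+1) n)%N.

(* Fourier multiplier of d/dx on mode k: 2 pi i k / X *)
Definition dmult (j : 'I_(J.*2.+1)) : R[i] :=
  'i * ((2 * pi * (freq j)%:~R / X)%:C).

Definition DJ : 'M[R[i]]_(dimJ) := mxdiag (fun j : 'I_(J.*2.+1) => (@scalar_mx _ n (dmult j))).

(* (d^2/dx^2 - 1)^{-1} restricted to H_J (a Fourier multiplier, so it
   commutes with P_J) *)
Definition RJ : 'M[R[i]]_(dimJ) :=
  mxdiag (fun j : 'I_(J.*2.+1) => (@scalar_mx _ n (((dmult j) ^+ 2 - 1)^-1))).

(* A_{m,J} : block Toeplitz matrix (hat A_m (j - k))_{|j|,|k| <= J} *)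
Definition AJ (Ahat : int -> 'M[R[i]]_n) : 'M[R[i]]_(dimJ) :=
  \mxblock_(j < J.*2.+1, k < J.*2.+1) Ahat (freq j - freq k).

Definition LJ (A0 A1 : int -> 'M[R[i]]_n) : 'M[R[i]]_(dimJ) :=
  DJ *m DJ + DJ *m AJ A1 + AJ A0.

Definition KJ (A0 A1 : int -> 'M[R[i]]_n) (lam : R[i]) : 'M[R[i]]_(dimJ) :=
  (DJ *m RJ) *m AJ A1 + RJ *m (AJ A0 + (1 - lam)%:M).

(* D_J(lambda) = det_2(I + K_J(lambda)) = det_2(I - (-K_J(lambda))) *)
Definition DJfun (A0 A1 : int -> 'M[R[i]]_n) (lam : R[i]) : R[i] :=
  det2 (- KJ A0 A1 lam).

End Hill.

(* Since (2 pi i k / X)^2 - 1 = -(1 + (2 pi k / X)^2) never vanishes, the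
   diagonal matrix R_J := (D_J^2 - 1)^-1 exists, I + K_J(lam) = R_J (L_J - lam),
   and the trace of K_J(lam) is affine in lam.  Hence D_J(lam) = chi(lam) h(lam),
   where chi is the characteristic polynomial of L_J and
   h(lam) = (-1)^N det R_J exp(a + b lam) is continuous and never vanishes, so
   D_J has exactly the zeros of chi, with the same orders. *)

From mathcomp Require Import all_boot all_algebra complex.
From mathcomp Require Import all_classical all_reals all_analysis.
From mathcomp Require Import order ring.
Import Order.TTheory GRing.Theory Num.Theory.
Import numFieldNormedType.Exports.

Local Open Scope ring_scope.
Local Open Scope complex_scope.

Section ComplexContinuity.
Variable R : realType.
(* The topology of C comes from the normed module R[i]^o; its neighbourhood
   filters are not found by inference, hence the explicit [FF := nbhs_filter _]. *)
Notation C := (R[i]^o).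

Lemma gtc0_real (d : R[i]) : 0 < d -> exists2 e : R, 0 < e & d = e%:C.
Proof. by case: d => a b; rewrite ltcE /= => /andP[/eqP -> a0]; exists a. Qed.

Lemma normc_real (x : R) : `|x%:C| = `|x|%:C.
Proof. by rewrite normc_def /= expr0n /= addr0 sqrtr_sqr. Qed.

Lemma normc_ge_Im (x : R[i]) : `|complex.Im x|%:C <= `|x|.
Proof.
have -> : complex.Im x = - complex.Re (x * 'i) by rewrite ReiNIm opprK.
by rewrite normrN (le_trans (normc_ge_Re _)) // normrM normCi mulr1.
Qed.

Lemma continuous_real_complex : continuous (fun x : R => (x%:C : C)).
Proof.
move=> x; apply/cvgrPdist_lt => _ /gtc0_real[e e0 ->].
apply/nbhs_normP; exists e => // y /=.
by rewrite -rmorphB normc_real ltcR.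
Qed.

Lemma continuous_normc_dominated (f : C -> R) :
  (forall z w, f z - f w = f (z - w)) -> (forall z, `|f z|%:C <= `|z|) ->
  continuous f.
Proof.
move=> fB f_le z; apply/(@cvgrPdist_lt _ R _ _ (nbhs_filter z)) => e e0.
apply/(@nbhs_normP _ C); exists e%:C => [|w]; first by rewrite /= ltcR.
by rewrite /= -ltcR fB; apply: le_lt_trans.
Qed.

Lemma continuous_Re : continuous (fun z : C => complex.Re z).
Proof. by apply: continuous_normc_dominated => [[? ?] []|]; last exact: normc_ge_Re. Qed.

Lemma continuous_Im : continuous (fun z : C => complex.Im z).
Proof. by apply: continuous_normc_dominated => [[? ?] []|]; last exact: normc_ge_Im. Qed.

Lemma continuous_real_comp {f : R -> R} {g : C -> R} :
  continuous f -> continuous g -> continuous (fun z : C => ((f (g z))%:C : C)).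
Proof.
move=> fc gc z.
exact: continuous_comp (continuous_comp (gc z) (fc _)) (continuous_real_complex _).
Qed.

Lemma continuous_Cexp : continuous (@Cexp R : C -> C).
Proof.
have -> : @Cexp R = fun w => (expR (complex.Re w))%:C *
    ((cos (complex.Im w))%:C + 'i * (sin (complex.Im w))%:C).
  by apply/funext => w; rewrite /Cexp [X in _ * X = _]complexE.
move=> w; apply: (cvgM (FF := nbhs_filter w)).
  exact: (continuous_real_comp (@continuous_expR R) continuous_Re w).
apply: (cvgD (FF := nbhs_filter w)).
  exact: (continuous_real_comp (@continuous_cos R) continuous_Im w).
apply: (cvgM (FF := nbhs_filter w)); first exact: cvg_cst.
exact: (continuous_real_comp (@continuous_sin R) continuous_Im w).
Qed.

Lemma continuous_horner_complex (p : {poly R[i]}) : continuous (horner p : C -> C).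
Proof.
elim/poly_ind: p => [|p c IH] z.
  rewrite (_ : horner 0 = fun=> 0); last by apply/funext => w; rewrite horner0.
  exact: (@cst_continuous C C 0 z).
rewrite (_ : horner _ = fun w => p.[w] * w + c); last by apply/funext => w; rewrite hornerMXaddC.
apply: (cvgD (FF := nbhs_filter z)); last exact: cvg_cst.
apply: (cvgM (FF := nbhs_filter z)); [exact: IH | exact: cvg_id].
Qed.

Lemma continuous_Cexp_affine (a b : R[i]) : continuous (fun z : C => Cexp (a + z * b) : C).
Proof.
move=> z.
have affine_cvg : {for z, continuous (fun w : C => a + w * b : C)}.
  apply: (cvgD (FF := nbhs_filter z)); first exact: cvg_cst.
  by apply: (cvgM (FF := nbhs_filter z)); [exact: cvg_id | exact: cvg_cst].
exact: (continuous_comp affine_cvg (continuous_Cexp _)).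
Qed.

Lemma Ccont_at_continuous (g : C -> C) z0 : {for z0, continuous g} -> Ccont_at g z0.
Proof.
move=> /cvgrPdist_lt gc e e0.
have /gc /(@nbhs_normP _ C)[_ /gtc0_real[d d0 ->] gd] : (0 : C) < e%:C by rewrite ltcR.
by exists d => // z zd; rewrite distrC; apply: gd; rewrite /= distrC.
Qed.

Lemma Cexp_neq0 (w : R[i]) : Cexp w != 0.
Proof.
rewrite /Cexp mulf_neq0 //; first by rewrite fmorph_eq0 gt_eqF ?expR_gt0.
apply/negP => /eqP[cos0 sin0].
by have /eqP := cos2Dsin2 (complex.Im w); rewrite cos0 sin0 expr0n /= addr0 eq_sym oner_eq0.
Qed.

Lemma zero_order_horner_mul (p : {poly R[i]}) (h : R[i] -> R[i]) (z0 : R[i]) :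
  p != 0 -> {for z0, continuous (h : C -> C)} -> h z0 != 0 ->
  zero_order (fun z => p.[z] * h z) z0 (mup z0 p).
Proof.
move=> p0 hc hz0.
have [m [q /implyP/(_ p0) qz0 ->]] := multiplicity_XsubC p z0.
have -> : mup z0 (q * ('X - z0%:P) ^+ m) = m by rewrite mupMr // mup_XsubCX eqxx.
exists (fun z => q.[z] * h z); split.
- by move=> z; rewrite hornerM horner_exp hornerXsubC mulrCA mulrA.
- apply: Ccont_at_continuous; apply: (cvgM (FF := nbhs_filter (z0 : C))).
    exact: continuous_horner_complex.
  exact: hc.
- by rewrite mulf_neq0.
Qed.
End ComplexContinuity.

Lemma char_poly_horner (F : comNzRingType) m (A : 'M[F]_m) a :
  (char_poly A).[a] = \det (a%:M - A).
Proof.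
rewrite horner_sum; apply: eq_bigr => s _; rewrite hornerM horner_exp !hornerE.
congr (_ * _); rewrite (big_morph _ (fun p q => hornerM p q a) (hornerC 1 a)).
by apply: eq_bigr => i _; rewrite !mxE !(hornerE, hornerMn).
Qed.

Lemma mxdiag_scalar_mul (F : comNzRingType) p (q_ : 'I_p -> nat) (a b : 'I_p -> F) :
  mxdiag (fun j => ((a j)%:M : 'M[F]_(q_ j))) *m mxdiag (fun j => ((b j)%:M : 'M[F]_(q_ j)))
  = mxdiag (fun j => ((a j * b j)%:M : 'M[F]_(q_ j))).
Proof.
rewrite {2}/mxdiag mul_mxdiag_mxblock /mxdiag; apply/eq_mxblock => i j.
by case: eqVneq => [<-|]; rewrite ?conform_mx_id ?mulmx0 // scalar_mxM.
Qed.

Section HillTruncation.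
Variables (R : realType) (X : R) (n J : nat) (A0 A1 : int -> 'M[R[i]]_n).
Local Notation N := (\sum_(j < J.*2.+1) n)%N.

Lemma dmult_sqr_subr1_neq0 (j : 'I_J.*2.+1) : dmult X j ^+ 2 - 1 != 0.
Proof.
rewrite /dmult exprMn sqr_i -rmorphXn mulN1r -opprD oppr_eq0.
rewrite (_ : 1 = 1%:C) // -rmorphD fmorph_eq0 gt_eqF //.
by rewrite ltr_wpDl ?sqr_ge0 ?ltr01.
Qed.

Lemma RJ_mul_DJ2 : RJ X n J *m (DJ X n J *m DJ X n J) = 1%:M + RJ X n J.
Proof.
rewrite /RJ /DJ !mxdiag_scalar_mul -(mxdiagZ 1) -mxdiagD; apply: eq_mxdiag => j.
rewrite -raddfD /=; congr (_%:M).
have := dmult_sqr_subr1_neq0 j; set d := dmult X j => d_neq0.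
by rewrite -expr2 -{2}(subrK 1 (d ^+ 2)) mulrDr mulVf // mulr1.
Qed.

Lemma DJ_RJC : DJ X n J *m RJ X n J = RJ X n J *m DJ X n J.
Proof. by rewrite /RJ /DJ !mxdiag_scalar_mul; apply: eq_mxdiag => j; rewrite mulrC. Qed.

Lemma det_RJ_neq0 : \det (RJ X n J) != 0.
Proof.
have RJ_inv : RJ X n J *m (DJ X n J *m DJ X n J - 1%:M) = 1%:M.
  by rewrite mulmxBr RJ_mul_DJ2 mulmx1 addrK.
by have [] := mulmx1_unit RJ_inv; rewrite unitmxE unitfE.
Qed.

Lemma KJ_affine lam : KJ X J A0 A1 lam = KJ X J A0 A1 0 - lam *: RJ X n J.
Proof. by rewrite /KJ !mulmxDr !mul_mx_scalar !scalerBl scale1r scale0r subr0 !addrA. Qed.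

Lemma one_add_KJ lam : 1%:M - - KJ X J A0 A1 lam = RJ X n J *m (LJ X J A0 A1 - lam%:M).
Proof.
rewrite /KJ /LJ opprK mulmxBr !mulmxDr RJ_mul_DJ2 mulmxA -DJ_RJC.
rewrite !mul_mx_scalar scalerBl scale1r !addrA; congr (_ - _).
by rewrite -!addrA; congr (_ + _); rewrite [RHS]addrC -addrA.
Qed.

Lemma DJfun_char_poly lam :
  DJfun X J A0 A1 lam = (char_poly (LJ X J A0 A1)).[lam] *
    ((-1) ^+ N * \det (RJ X n J) * Cexp (\tr (- KJ X J A0 A1 0) + lam * \tr (RJ X n J))).
Proof.
rewrite /DJfun /det2 one_add_KJ det_mulmx char_poly_horner KJ_affine.
rewrite -(opprB lam%:M) -scaleN1r detZ opprB !raddfB /= mxtraceZ.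
by rewrite [\tr (- _)]raddfN [_ + lam * _]addrC; ring.
Qed.
End HillTruncation.

Theorem lemma3p7 (R : realType) (X : R) (n : nat) (A0hat A1hat : int -> 'M[R[i]]_n)
    (J : nat) :
  0 < X -> (0 < n)%N ->
  (forall lam : R[i],
     DJfun X J A0hat A1hat lam = 0 <-> eigenvalue (LJ X J A0hat A1hat) lam) /\
  (forall lam : R[i], eigenvalue (LJ X J A0hat A1hat) lam ->
     zero_order (DJfun X J A0hat A1hat) lam
                (mup lam (char_poly (LJ X J A0hat A1hat)))).
Proof.
move=> _ _.
set p := char_poly _.
set h := fun lam => (-1) ^+ (\sum_(j < J.*2.+1) n)%N * \det (RJ X n J) *
  Cexp (\tr (- KJ X J A0hat A1hat 0) + lam * \tr (RJ X n J)).
have DJfunE : DJfun X J A0hat A1hat = fun lam => p.[lam] * h lam.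
  by apply/funext => lam; rewrite DJfun_char_poly.
have h_neq0 lam : h lam != 0.
  by rewrite /h mulf_neq0 ?Cexp_neq0 // mulf_neq0 ?det_RJ_neq0 ?signr_eq0.
split=> lam; rewrite eigenvalue_root_char DJfunE.
  split=> [/eqP | /rootP ->]; last by rewrite mul0r.
  by rewrite mulf_eq0 (negbTE (h_neq0 lam)) orbF.
move=> _; apply: zero_order_horner_mul (h_neq0 lam).
  exact: monic_neq0 (char_poly_monic _).
apply: (cvgM (FF := nbhs_filter (lam : R[i]^o))); first exact: cvg_cst.
exact: continuous_Cexp_affine.
Qed.
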